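(* Consider a neutral evolutionary model on $N$ sites given by a replacement rule $p$ satisfying the fixation assumption described in the context, with replacement probabilities $e_{ij}$, birth rates $b_i$, death rates $d_i$, total birth rate $B>0$, site-specific fixation probabilities $\rho_i$, overall fixation probability $\rho=\frac{1}{B}\sum_{i=1}^N d_i\rho_i$ and molecular clock rate $K=Nu\rho$ (for a mutation probability $u>0$ per reproduction). If the birth rates $b_i$ are constant over all sites $i=1,\ldots,N$, then $\rho\le 1/N$, and consequently $K\le u$, with equality if and only if the death rates $d_i$ are also constant over all sites.
   Context: There are $N$ sites $1,\ldots,N$, each always occupied by one individual of type M (mutant) or R (resident); a state is $\mathbf{s}\in\{\mathrm{M},\mathrm{R}\}^N$. A replacement event is a pair $(R,\alpha)$ with $R\subseteq\{1,\ldots,N\}$ and $\alpha:R\to\{1,\ldots,N\}$. A replacement rule is a probability distribution $p(R,\alpha)$ on replacement events, independent of the state. The evolutionary Markov chain: at each time-step an event $(R,\alpha)$ is drawn with probability $p(R,\alpha)$ and the new state is $s_i'=s_i$ if $i\notin R$, $s_i'=s_{\alpha(i)}$ if $i\in R$. Fixation assumption: there exist a site $i$ and a finite sequence of replacement events, each of positive probability, such that if these events occur consecutively (from any initial state) every site ends up carrying the type initially at site $i$. Define $e_{ij}=\sum_{(R,\alpha):\, j\in R,\ \alpha(j)=i}p(R,\alpha)$, $b_i=\sum_j e_{ij}$, $d_i=\sum_j e_{ji}$, $B=\sum_{i,j}e_{ij}$. The site-specific fixation probability $\rho_i$ is the probability that the chain started from the state with M at site $i$ and R elsewhere is eventually absorbed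 in $(\mathrm{M},\ldots,\mathrm{M})$. *)

From HB Require Import structures.
From mathcomp Require Import all_boot all_order all_algebra.
From mathcomp Require Import all_classical all_reals all_analysis.
Set Implicit Arguments. Unset Strict Implicit. Unset Printing Implicit Defensive.
Import Order.TTheory GRing.Theory Num.Theory.
Import numFieldNormedType.Exports.
Local Open Scope ring_scope.

(* A replacement event (R, alpha) on sites 'I_N is encoded as a finite function
   f : 'I_N -> option 'I_N with  R = {j | f j <> None}  and  alpha j = a  iff
   f j = Some a. *)
Definition event (N : nat) := {ffun 'I_N -> option 'I_N}.
(* A state: true = M (mutant), false = R (resident). *)
Definition state (N : nat) := {ffun 'I_N -> bool}.

Definition apply_event (N : nat) (e : event N) (s : state N) : state N :=
  [ffun j => if e j is Some a then s a else s j].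

Section Model.
Variables (R : realType) (N : nat) (p : event N -> R).

Definition is_replacement_rule : Prop :=
  (forall e, 0 <= p e) /\ \sum_(e : event N) p e = 1.

Definition fixation_assumption : Prop :=
  exists (i : 'I_N) (es : seq (event N)),
    (forall e, e \in es -> 0 < p e) /\
    forall (s : state N) (j : 'I_N),
      (foldl (fun s e => apply_event e s) s es) j = s i.

Definition e_rate (i j : 'I_N) : R := \sum_(ev : event N | ev j == Some i) p ev.
Definition birth (i : 'I_N) : R := \sum_(j < N) e_rate i j.
Definition death (i : 'I_N) : R := \sum_(j < N) e_rate j i.
Definition Btot : R := \sum_(i < N) \sum_(j < N) e_rate i j.

Definition trans (s s' : state N) : R :=
  \sum_(ev : event N | apply_event ev s == s') p ev.

Fixpoint distn (s0 : state N) (t : nat) : state N -> R :=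
  match t with
  | 0 => fun s => (s == s0)%:R
  | t.+1 => fun s' => \sum_(s : state N) distn s0 t s * trans s s'
  end.

Definition allM : state N := [ffun _ => true].
Definition single (i : 'I_N) : state N := [ffun j => j == i].

(* site-specific fixation probability: probability of eventual absorption in
   allM (absorbing), i.e. the limit of P(X_t = allM) started from single i *)
Definition rho_site (i : 'I_N) : R := limn (fun t => distn (single i) t allM).

Definition rho_overall : R := Btot^-1 * \sum_(i < N) death i * rho_site i.

Definition Krate (u : R) : R := N%:R * u * rho_overall.
End Model.

From HB Require Import structures.
From mathcomp Require Import all_boot all_order all_algebra.
From mathcomp Require Import all_classical all_reals all_analysis.
From mathcomp Require Import ring lra.
Import Order.TTheory GRing.Theory Num.Theory.
Import numFieldNormedType.Exports.
Local Open Scope ring_scope.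
Local Open Scope classical_set_scope.
Set Implicit Arguments. Unset Strict Implicit. Unset Printing Implicit Defensive.

(* The chain is driven by i.i.d. random parent maps G: after an event, site j
   carries a copy of site G j, so the state at time t is the initial state pulled
   back along G_1 o ... o G_t.  Hence rho_i is the limit of the (nondecreasing)
   probability that this composite is the constant map i.  The mass on
   nonconstant composites is submultiplicative in t and, by the fixation
   assumption, below 1 at some time, so it vanishes and sum_i rho_i = 1; a
   first-step analysis then gives d_i rho_i = sum_k e_ik rho_k.
   If every b_i equals b, summing the nonnegative Gibbs terms
   e_ik (rho_i - rho_k (1 + ln rho_i - ln rho_k)) over all pairs gives
   sum_i d_i rho_i <= b, i.e. rho <= 1/N as B = N b.  Equality forces
   rho_i = rho_k whenever e_ik > 0; the fixation path connects every site to a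
   single one, so rho is constant and then d_i = b for every i. *)

Lemma sum_eq_indicator (R : pzSemiRingType) (T : finType) (x : T) (F : T -> R) :
  \sum_y (x == y)%:R * F y = F x.
Proof.
rewrite (bigD1 x) //= eqxx mul1r big1 ?addr0 // => y /negbTE.
by rewrite eq_sym => ->; rewrite mul0r.
Qed.

Section SiteMaps.
Variable N : nat.

Definition smap := {ffun 'I_N -> 'I_N}.
Definition mcomp (A B : smap) : smap := [ffun j => A (B j)].
Definition idm : smap := [ffun j => j].
Definition cstm (i : 'I_N) : smap := [ffun => i].
Definition isconst (A : smap) := [exists i, A == cstm i].
Definition pullback (s : state N) (A : smap) : state N := [ffun j => s (A j)].

Lemma mcompA : associative mcomp.
Proof. by move=> A B C; apply/ffunP => j; rewrite !ffunE. Qed.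
Lemma mcomp1m : left_id idm mcomp.
Proof. by move=> A; apply/ffunP => j; rewrite !ffunE. Qed.
Lemma mcompm1 : right_id idm mcomp.
Proof. by move=> A; apply/ffunP => j; rewrite !ffunE. Qed.
Lemma pullback_mcomp s A B : pullback (pullback s A) B = pullback s (mcomp A B).
Proof. by apply/ffunP => j; rewrite !ffunE. Qed.
Lemma pullback_id s : pullback s idm = s.
Proof. by apply/ffunP => j; rewrite !ffunE. Qed.

Lemma cstm_inj : injective cstm.
Proof. by move=> i j /ffunP/(_ i); rewrite !ffunE. Qed.
Lemma mcomp_cstml i A : mcomp (cstm i) A = cstm i.
Proof. by apply/ffunP => j; rewrite !ffunE. Qed.
Lemma mcomp_cstmr A k : mcomp A (cstm k) = cstm (A k).
Proof. by apply/ffunP => j; rewrite !ffunE. Qed.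

Lemma isconst_cstm i : isconst (cstm i).
Proof. by apply/existsP; exists i. Qed.
Lemma isconst_mcompl A B : isconst A -> isconst (mcomp A B).
Proof. by case/existsP => i /eqP ->; rewrite mcomp_cstml isconst_cstm. Qed.
Lemma isconst_mcompr A B : isconst B -> isconst (mcomp A B).
Proof. by case/existsP => k /eqP ->; rewrite mcomp_cstmr isconst_cstm. Qed.

Lemma const_partition (R : pzSemiRingType) (A : smap) :
  \sum_i (cstm i == A)%:R + (~~ isconst A)%:R = 1 :> R.
Proof.
case: (boolP (isconst A)) => [/existsP[i /eqP ->]|/existsP nc].
  rewrite (bigD1 i) //= eqxx big1 => [|j /negbTE ji]; first by rewrite !addr0.
  by rewrite (inj_eq cstm_inj) ji.
rewrite big1 ?add0r // => i _.
by case: eqP => // Ai; case: nc; exists i; rewrite Ai.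
Qed.

End SiteMaps.

Section Convolution.
Variables (R : numDomainType) (N : nat).
Implicit Types (P : smap N -> R) (A B C : smap N).

Definition mconv P1 P2 C : R :=
  \sum_A \sum_B P1 A * P2 B * (mcomp A B == C)%:R.

Definition mdelta C : R := (idm N == C)%:R.

Lemma mconv_sumE P1 P2 (f : smap N -> R) :
  \sum_C mconv P1 P2 C * f C = \sum_A \sum_B P1 A * P2 B * f (mcomp A B).
Proof.
under eq_bigr do rewrite big_distrl /=.
rewrite exchange_big /=; apply: eq_bigr => A _.
under eq_bigr do rewrite big_distrl /=.
rewrite exchange_big /=; apply: eq_bigr => B _.
rewrite -[RHS](sum_eq_indicator (mcomp A B) (fun C => P1 A * P2 B * f C)).
apply: eq_bigr => C _.
by rewrite mulrAC mulrC.
Qed.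

Lemma mconv_mass P1 P2 : \sum_C mconv P1 P2 C = (\sum_A P1 A) * \sum_B P2 B.
Proof.
transitivity (\sum_C mconv P1 P2 C * 1); first by under [RHS]eq_bigr do rewrite mulr1.
rewrite mconv_sumE big_distrl; apply: eq_bigr => A _.
by rewrite big_distrr; apply: eq_bigr => B _; rewrite mulr1.
Qed.

Lemma mconvA P1 P2 P3 : mconv (mconv P1 P2) P3 = mconv P1 (mconv P2 P3).
Proof.
apply: funext => D.
transitivity (\sum_C mconv P1 P2 C * \sum_E P3 E * (mcomp C E == D)%:R).
  by apply: eq_bigr => C _; rewrite big_distrr; apply: eq_bigr => E _; rewrite /= mulrA.
rewrite (mconv_sumE _ _ (fun C => \sum_E P3 E * (mcomp C E == D)%:R)).
apply: eq_bigr => A _.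
transitivity (P1 A * \sum_F mconv P2 P3 F * (mcomp A F == D)%:R); last first.
  by rewrite big_distrr; apply: eq_bigr => F _; rewrite /= mulrA.
rewrite (mconv_sumE _ _ (fun F => (mcomp A F == D)%:R)) big_distrr; apply: eq_bigr => B _.
rewrite !big_distrr; apply: eq_bigr => E _.
by rewrite /= mcompA !mulrA.
Qed.

Lemma mconv_deltal P : mconv mdelta P = P.
Proof.
apply: funext => C.
transitivity (\sum_A mdelta A * \sum_B P B * (mcomp A B == C)%:R).
  by apply: eq_bigr => A _; rewrite big_distrr; apply: eq_bigr => B _; rewrite /= mulrA.
rewrite sum_eq_indicator -[RHS](sum_eq_indicator C); apply: eq_bigr => B _.
by rewrite mcomp1m mulrC eq_sym.
Qed.

Lemma mconv_deltar P : mconv P mdelta = P.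
Proof.
apply: funext => C; rewrite -[RHS](sum_eq_indicator C); apply: eq_bigr => A _.
transitivity (\sum_B mdelta B * (P A * (mcomp A B == C)%:R)).
  by apply: eq_bigr => B _; rewrite mulrCA mulrA.
by rewrite sum_eq_indicator mcompm1 mulrC eq_sym.
Qed.

Lemma mconv_ge0 P1 P2 C :
  (forall A, 0 <= P1 A) -> (forall B, 0 <= P2 B) -> 0 <= mconv P1 P2 C.
Proof.
move=> ge0_1 ge0_2; apply: sumr_ge0 => A _; apply: sumr_ge0 => B _.
by rewrite !mulr_ge0.
Qed.

Lemma mconv_ge_mul P1 P2 A B :
  (forall A, 0 <= P1 A) -> (forall B, 0 <= P2 B) ->
  P1 A * P2 B <= mconv P1 P2 (mcomp A B).
Proof.
move=> ge0_1 ge0_2; rewrite /mconv (bigD1 A) //= (bigD1 B) //= eqxx mulr1 -addrA lerDl.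
by do ![apply: addr_ge0 | apply: sumr_ge0 => ? _]; rewrite !mulr_ge0.
Qed.

End Convolution.
Arguments mdelta {R N}.

Lemma cvgn_sum (R : realType) (I : Type) (r : seq I) (u : I -> nat -> R) (l : I -> R) :
  (forall i, u i @ \oo --> l i) ->
  (fun t => \sum_(i <- r) u i t) @ \oo --> \sum_(i <- r) l i.
Proof. by move=> ul; apply: cvg_big => //; exact: add_continuous. Qed.

Section MapPowers.
Variables (R : realType) (N : nat) (mu : smap N -> R).
Hypothesis mu_ge0 : forall G, 0 <= mu G.
Hypothesis mu_mass1 : \sum_G mu G = 1.

(* [mpow t] is the law of [G_1 \o ... \o G_t] for independent [G_k] of law [mu]. *)
Definition mpow t : smap N -> R := iter t (fun P => mconv P mu) mdelta.

Lemma mpowS t : mpow t.+1 = mconv (mpow t) mu.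
Proof. by []. Qed.

Lemma mpow1 : mpow 1 = mu.
Proof. exact: mconv_deltal. Qed.

Lemma mpowD s t : mpow (s + t) = mconv (mpow s) (mpow t).
Proof.
elim: t => [|t IH]; first by rewrite addn0 mconv_deltar.
by rewrite addnS !mpowS IH mconvA.
Qed.

Lemma mpow_ge0 t A : 0 <= mpow t A.
Proof. by elim: t A => [|t IH] A; [exact: ler0n | exact: mconv_ge0]. Qed.

Lemma mpow_mass1 t : \sum_A mpow t A = 1.
Proof.
elim: t => [|t IH]; last by rewrite mpowS mconv_mass IH mu_mass1 mulr1.
by rewrite /= /mdelta (bigD1 (idm N)) //= eqxx big1 ?addr0 // => A /negbTE; rewrite eq_sym => ->.
Qed.

Definition cst_prob t i := mpow t (cstm i).
Definition nonconst_prob t := \sum_A mpow t A * (~~ isconst A)%:R.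
Definition parent_prob (k i : 'I_N) := \sum_G mu G * (G k == i)%:R.

Lemma cst_prob_ge0 t i : 0 <= cst_prob t i.
Proof. exact: mpow_ge0. Qed.

Lemma nonconst_prob_ge0 t : 0 <= nonconst_prob t.
Proof. by apply: sumr_ge0 => A _; rewrite mulr_ge0 ?mpow_ge0. Qed.

Lemma cst_prob_partition t : \sum_i cst_prob t i + nonconst_prob t = 1.
Proof.
rewrite -(mpow_mass1 t).
under [RHS]eq_bigr => A _ do rewrite -[mpow t A]mulr1 -(const_partition R A) mulrDr.
rewrite big_split /=; congr (_ + _).
under [RHS]eq_bigr do rewrite big_distrr /=.
rewrite [RHS]exchange_big /=; apply: eq_bigr => i _.
by rewrite /cst_prob -(sum_eq_indicator (cstm i)); apply: eq_bigr => A _; rewrite mulrC.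
Qed.

Lemma cst_prob_le1 t i : cst_prob t i <= 1.
Proof.
rewrite -(cst_prob_partition t) (bigD1 i) //= -addrA lerDl.
by rewrite addr_ge0 ?nonconst_prob_ge0 ?sumr_ge0 // => j _; exact: cst_prob_ge0.
Qed.

Lemma nonconst_mcomp_le (A B : smap N) :
  (~~ isconst (mcomp A B))%:R <= (~~ isconst A)%:R * (~~ isconst B)%:R :> R.
Proof.
rewrite -natrM ler_nat.
case hA: (isconst A); first by rewrite isconst_mcompl.
case hB: (isconst B); first by rewrite isconst_mcompr.
by case: (~~ _).
Qed.

Lemma nonconst_probD s t : nonconst_prob (s + t) <= nonconst_prob s * nonconst_prob t.
Proof.
rewrite /nonconst_prob mpowD mconv_sumE big_distrl; apply: ler_sum => A _.
rewrite big_distrr /=; apply: ler_sum => B _.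
rewrite mulrACA ler_wpM2l ?mulr_ge0 ?mpow_ge0 //; exact: nonconst_mcomp_le.
Qed.

Lemma cst_prob_nondecr t i : cst_prob t i <= cst_prob t.+1 i.
Proof.
rewrite /cst_prob mpowS /mconv (bigD1 (cstm i)) //=.
under eq_bigr => G _ do rewrite mcomp_cstml eqxx mulr1.
rewrite -big_distrr /= mu_mass1 mulr1 lerDl.
by apply: sumr_ge0 => A _; apply: sumr_ge0 => G _; rewrite !mulr_ge0 ?mpow_ge0.
Qed.

Lemma indicator_mcomp_cstm (G A : smap N) i :
  (mcomp G A == cstm i)%:R =
  \sum_k (cstm k == A)%:R * (G k == i)%:R + (~~ isconst A && (mcomp G A == cstm i))%:R :> R.
Proof.
case: (boolP (isconst A)) => [/existsP[k /eqP ->]|ncA]; last first.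
  rewrite /= big1 ?add0r // => k _.
  by case: eqP => [Ak|]; [case/negP: ncA; rewrite -Ak isconst_cstm | rewrite mul0r].
rewrite /= addr0 (bigD1 k) //= eqxx mul1r mcomp_cstmr (inj_eq (@cstm_inj N)).
by rewrite big1 ?addr0 // => j /negbTE jk; rewrite (inj_eq (@cstm_inj N)) jk mul0r.
Qed.

Lemma cst_prob_succE t i :
  cst_prob t.+1 i = \sum_k parent_prob k i * cst_prob t k +
    \sum_G \sum_A mu G * mpow t A * (~~ isconst A && (mcomp G A == cstm i))%:R.
Proof.
have -> : cst_prob t.+1 i = mconv mu (mpow t) (cstm i) by rewrite -mpow1 -mpowD.
rewrite /mconv.
under eq_bigr => G _ do under eq_bigr => A _ do rewrite indicator_mcomp_cstm mulrDr.
under eq_bigr => G _ do rewrite big_split /=.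
rewrite big_split /=; congr (_ + _).
under [RHS]eq_bigr => k _ do rewrite /parent_prob big_distrl /=.
rewrite [RHS]exchange_big /=; apply: eq_bigr => G _.
under eq_bigr => A _ do rewrite big_distrr /=.
rewrite exchange_big /=; apply: eq_bigr => k _.
rewrite /cst_prob -(sum_eq_indicator (cstm k) (fun A => mu G * (G k == i)%:R * mpow t A)).
by apply: eq_bigr => A _; ring.
Qed.

Lemma cst_prob_succ_bounds t i :
  \sum_k parent_prob k i * cst_prob t k <= cst_prob t.+1 i <=
  \sum_k parent_prob k i * cst_prob t k + nonconst_prob t.
Proof.
rewrite cst_prob_succE lerDl lerD2l; apply/andP; split.
  by do 2!apply: sumr_ge0 => ? _; rewrite !mulr_ge0 ?mpow_ge0.
have -> : nonconst_prob t = \sum_G mu G * nonconst_prob t.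
  by rewrite -big_distrl /= mu_mass1 mul1r.
apply: ler_sum => G _; rewrite big_distrr /=; apply: ler_sum => A _.
rewrite -mulrA ler_wpM2l // ler_wpM2l ?mpow_ge0 // ler_nat.
by case: (~~ isconst A) => //=; exact: leq_b1.
Qed.

Definition fix_prob i := limn (cst_prob ^~ i).

Lemma cst_prob_cvg i : cst_prob ^~ i @ \oo --> fix_prob i.
Proof.
have cvg_sup : cst_prob ^~ i @ \oo --> sup (range (cst_prob ^~ i)).
  apply: nondecreasing_cvgn; first by apply/nondecreasing_seqP => t; exact: cst_prob_nondecr.
  by exists 1 => _ [t _ <-]; exact: cst_prob_le1.
by rewrite /fix_prob (cvg_lim _ cvg_sup).
Qed.

Lemma fix_prob_ge0 i : 0 <= fix_prob i.
Proof.
apply: (@ler_cvg_to _ \oo _ _ (fun=> 0) (cst_prob ^~ i)).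
- exact: cvg_cst.
- exact: cst_prob_cvg.
- by apply: nearW => t; exact: cst_prob_ge0.
Qed.

Lemma nonconst_prob_cvg : nonconst_prob @ \oo --> 1 - \sum_i fix_prob i.
Proof.
have -> : nonconst_prob = fun t => 1 - \sum_i cst_prob t i.
  by apply: funext => t; rewrite -(cst_prob_partition t) addrC addKr.
by apply: cvgB; [exact: cvg_cst | apply: cvgn_sum => i; exact: cst_prob_cvg].
Qed.

Section Hitting.
Variables (L : nat) (i0 : 'I_N).
Hypothesis hit : 0 < cst_prob L i0.

Lemma fix_prob_sum1 : \sum_i fix_prob i = 1.
Proof.
set l := 1 - \sum_i fix_prob i.
have nonconst_L_lt1 : nonconst_prob L < 1.
  rewrite -(cst_prob_partition L) ltrDr (bigD1 i0) //= ltr_pwDl //.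
  by apply: sumr_ge0 => i _; exact: cst_prob_ge0.
have l_ge0 : 0 <= l.
  apply: (@ler_cvg_to _ \oo _ _ (fun=> 0) nonconst_prob).
  - exact: cvg_cst.
  - exact: nonconst_prob_cvg.
  - by apply: nearW => t; exact: nonconst_prob_ge0.
have l_le : l <= l * nonconst_prob L.
  apply: (@ler_cvg_to _ \oo _ _ (fun t => nonconst_prob (t + L)) (fun t => nonconst_prob t * nonconst_prob L)).
  - by have := nonconst_prob_cvg; rewrite -(cvg_shiftn L).
  - exact: cvgMr_tmp nonconst_prob_cvg.
  - by apply: nearW => t; exact: nonconst_probD.
have : l = 0 by nra.
by rewrite /l => /eqP; rewrite subr_eq0 => /eqP <-.
Qed.

Lemma fix_prob_stationary i : fix_prob i = \sum_k parent_prob k i * fix_prob k.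
Proof.
set next := fun t => cst_prob t.+1 i.
set avg := fun t => \sum_k parent_prob k i * cst_prob t k.
have next_cvg : next @ \oo --> fix_prob i by have := @cst_prob_cvg i; rewrite -cvg_shiftS.
have avg_cvg : avg @ \oo --> \sum_k parent_prob k i * fix_prob k.
  by apply: cvgn_sum => k; apply: cvgMl_tmp; exact: cst_prob_cvg.
have nonconst_cvg0 : nonconst_prob @ \oo --> 0 by rewrite -(subrr 1) -{2}fix_prob_sum1; exact: nonconst_prob_cvg.
apply/le_anti/andP; split.
  rewrite -[X in _ <= X]addr0.
  apply: (@ler_cvg_to _ \oo _ _ next (avg \+ nonconst_prob)).
  - exact: next_cvg.
  - exact: cvgD avg_cvg nonconst_cvg0.
  - by apply: nearW => t; case/andP: (cst_prob_succ_bounds t i).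
apply: (@ler_cvg_to _ \oo _ _ avg next).
- exact: avg_cvg.
- exact: next_cvg.
- by apply: nearW => t; case/andP: (cst_prob_succ_bounds t i).
Qed.

End Hitting.

End MapPowers.

Section Model.
Variables (R : realType) (N : nat) (p : event N -> R).
Hypothesis p_ge0 : forall e, 0 <= p e.
Hypothesis p_sum1 : \sum_e p e = 1.

Definition parent_map (e : event N) : smap N :=
  [ffun j => if e j is Some a then a else j].
Definition parent_law (G : smap N) : R := \sum_(e | parent_map e == G) p e.

Lemma sum_parent_law (F : smap N -> R) :
  \sum_G parent_law G * F G = \sum_e p e * F (parent_map e).
Proof.
under eq_bigr => G _ do rewrite /parent_law big_distrl /= big_mkcond /=.
rewrite exchange_big /=; apply: eq_bigr => e _.
rewrite -(sum_eq_indicator (parent_map e) (fun G => p e * F G)).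
by apply: eq_bigr => G _; case: eqP; rewrite ?mul1r ?mul0r.
Qed.

Lemma parent_law_ge0 G : 0 <= parent_law G.
Proof. exact: sumr_ge0. Qed.

Lemma parent_law_mass1 : \sum_G parent_law G = 1.
Proof.
transitivity (\sum_G parent_law G * 1); first by under [RHS]eq_bigr do rewrite mulr1.
by rewrite sum_parent_law -[RHS]p_sum1; under eq_bigr do rewrite mulr1.
Qed.

Lemma parent_law_ge e : p e <= parent_law (parent_map e).
Proof. by rewrite /parent_law (bigD1 e) //= lerDl sumr_ge0. Qed.

Lemma apply_eventE e s : apply_event e s = pullback s (parent_map e).
Proof. by apply/ffunP => j; rewrite !ffunE; case: (e j). Qed.

Lemma trans_parent_law s s' : trans p s s' = \sum_G parent_law G * (pullback s G == s')%:R.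
Proof.
rewrite sum_parent_law /trans big_mkcond /=; apply: eq_bigr => e _.
by rewrite apply_eventE; case: eqP; rewrite ?mulr1 ?mulr0.
Qed.

Lemma distn_mpow s0 t s :
  distn p s0 t s = \sum_A mpow parent_law t A * (pullback s0 A == s)%:R.
Proof.
elim: t s => [|t IH] s; first by rewrite /= sum_eq_indicator pullback_id eq_sym.
rewrite mpowS mconv_sumE /=.
under [LHS]eq_bigr => s1 _ do rewrite IH big_distrl /=.
rewrite exchange_big /=; apply: eq_bigr => A _.
transitivity (mpow parent_law t A * trans p (pullback s0 A) s).
  rewrite -(sum_eq_indicator (pullback s0 A) (fun s1 => mpow parent_law t A * trans p s1 s)).
  by apply: eq_bigr => s1 _; rewrite eq_sym; ring.
rewrite trans_parent_law big_distrr /=; apply: eq_bigr => G _.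
by rewrite pullback_mcomp mulrA.
Qed.

Lemma distn_single i t : distn p (single i) t (allM N) = cst_prob parent_law t i.
Proof.
rewrite distn_mpow /cst_prob -(sum_eq_indicator (cstm i) (mpow parent_law t)).
apply: eq_bigr => A _; rewrite mulrC; congr ((_ : bool)%:R * _).
apply/idP/idP => [/eqP/ffunP Ai|/eqP <-]; apply/eqP/ffunP => j; last by rewrite !ffunE eqxx.
by move: (Ai j); rewrite !ffunE => /eqP.
Qed.

Lemma rho_siteE i : rho_site p i = fix_prob parent_law i.
Proof. by rewrite /rho_site /fix_prob (funext (distn_single i)). Qed.

Lemma e_rateE i k : e_rate p i k = \sum_e p e * (e k == Some i)%:R.
Proof.
rewrite /e_rate big_mkcond /=; apply: eq_bigr => e _.
by case: eqP; rewrite ?mulr1 ?mulr0.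
Qed.

Lemma e_rate_ge0 i k : 0 <= e_rate p i k.
Proof. exact: sumr_ge0. Qed.

Lemma e_rate_ge (e : event N) k a : e k = Some a -> p e <= e_rate p a k.
Proof. by move=> eka; rewrite /e_rate (bigD1 e) ?eka //= lerDl sumr_ge0. Qed.

Lemma sum_p_unreplaced k : \sum_e p e * (e k == None)%:R = 1 - death p k.
Proof.
have unreplaced (o : option 'I_N) : (o == None)%:R = 1 - \sum_j (o == Some j)%:R :> R.
  case: o => [a|]; last by rewrite big1 ?subr0.
  rewrite (bigD1 a) //= eqxx big1 ?addr0 ?subrr // => j /negbTE ja.
  by case: eqP => // -[aj]; rewrite aj eqxx in ja.
transitivity (\sum_e p e - \sum_j e_rate p j k); last by rewrite p_sum1.
under [X in _ - X]eq_bigr do rewrite e_rateE.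
rewrite exchange_big -sumrB; apply: eq_bigr => e _.
by rewrite unreplaced mulrBr mulr1 big_distrr.
Qed.

Lemma parent_prob_parent_law k i :
  parent_prob parent_law k i = e_rate p i k + (i == k)%:R * (1 - death p i).
Proof.
rewrite /parent_prob sum_parent_law e_rateE -sum_p_unreplaced big_distrr -big_split /=.
apply: eq_bigr => e _; rewrite /parent_map ffunE.
have [<-|ik] := eqVneq i k; last by rewrite mul0r addr0; case: (e k) => // /=; rewrite eq_sym (negbTE ik).
by case: (e i) => [a|] /=; rewrite ?(inj_eq (@Some_inj _)) ?eqxx ?mulr0 ?mulr1 ?mul1r ?addr0 ?add0r.
Qed.

Definition ancestor_map (es : seq (event N)) : smap N :=
  foldl (fun A e => mcomp A (parent_map e)) (idm N) es.

Lemma ancestor_map_rcons es e :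
  ancestor_map (rcons es e) = mcomp (ancestor_map es) (parent_map e).
Proof. by rewrite /ancestor_map foldl_rcons. Qed.

Lemma foldl_apply_event s es :
  foldl (fun s e => apply_event e s) s es = pullback s (ancestor_map es).
Proof.
elim/last_ind: es => [|es e IH]; first by rewrite pullback_id.
by rewrite foldl_rcons IH ancestor_map_rcons apply_eventE pullback_mcomp.
Qed.

Lemma fixation_ancestor_map : fixation_assumption p ->
  exists i0 es, (forall e, e \in es -> 0 < p e) /\ ancestor_map es = cstm i0.
Proof.
case=> i0 [es [p_gt0 fixed]]; exists i0, es; split => //.
apply/ffunP => j; have := fixed (single i0) j.
by rewrite foldl_apply_event !ffunE eqxx => /eqP.
Qed.

Lemma mpow_ancestor_map es :
  \prod_(e <- es) p e <= mpow parent_law (size es) (ancestor_map es).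
Proof.
elim/last_ind: es => [|es e IH]; first by rewrite big_nil /= /mdelta eqxx.
rewrite -cats1 big_cat big_seq1 /= cats1 size_rcons ancestor_map_rcons mpowS.
apply: le_trans (mconv_ge_mul _ _ (mpow_ge0 parent_law_ge0 _) parent_law_ge0).
by rewrite ler_pM ?prodr_ge0 ?parent_law_ge.
Qed.

Lemma ancestor_map_invariant (T : Type) (f : 'I_N -> T) es :
  (forall i k, 0 < e_rate p i k -> f i = f k) -> (forall e, e \in es -> 0 < p e) ->
  forall j, f (ancestor_map es j) = f j.
Proof.
move=> edge; elim/last_ind: es => [|es e IH] p_gt0 j; first by rewrite ffunE.
rewrite ancestor_map_rcons ffunE IH => [|e' e'es]; last by rewrite p_gt0 // mem_rcons in_cons e'es orbT.
rewrite /parent_map ffunE; case ej: (e j) => [a|] //; apply: edge.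
by apply: lt_le_trans (e_rate_ge ej); rewrite p_gt0 // mem_rcons mem_head.
Qed.

Lemma rho_site_ge0 i : 0 <= rho_site p i.
Proof. by rewrite rho_siteE; exact: fix_prob_ge0 parent_law_ge0 parent_law_mass1 i. Qed.

Section Fixation.
Hypothesis fixation : fixation_assumption p.

Lemma fixation_const (T : Type) (f : 'I_N -> T) :
  (forall i k, 0 < e_rate p i k -> f i = f k) -> forall i j, f i = f j.
Proof.
move=> edge; have [i0 [es [p_gt0 anc]]] := fixation_ancestor_map fixation.
have f_i0 j : f j = f i0.
  by rewrite -(ancestor_map_invariant edge p_gt0) anc ffunE.
by move=> i j; rewrite !f_i0.
Qed.

Lemma fixation_hits : exists L i0, 0 < cst_prob parent_law L i0.
Proof.
have [i0 [es [p_gt0 anc]]] := fixation_ancestor_map fixation.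
exists (size es), i0; rewrite /cst_prob -anc.
by apply: lt_le_trans (mpow_ancestor_map es); rewrite big_seq prodr_gt0.
Qed.

Lemma rho_site_sum1 : \sum_i rho_site p i = 1.
Proof.
have [L [i0 hit]] := fixation_hits.
by under eq_bigr do rewrite rho_siteE; exact: (fix_prob_sum1 parent_law_ge0 parent_law_mass1 hit).
Qed.

Lemma death_rho_site i :
  death p i * rho_site p i = \sum_k e_rate p i k * rho_site p k.
Proof.
have [L [i0 hit]] := fixation_hits.
have := fix_prob_stationary parent_law_ge0 parent_law_mass1 hit i.
under eq_bigr do rewrite parent_prob_parent_law mulrDl -mulrA.
rewrite big_split sum_eq_indicator /= -!rho_siteE.
under eq_bigr do rewrite -rho_siteE.
move=> stat; lra.
Qed.

End Fixation.

End Model.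

Section LogTangent.
Variable R : realType.

Lemma log_tangent_expR (x y : R) : 0 < x -> 0 < y ->
  x = y * expR (ln x - ln y).
Proof. by move=> x0 y0; rewrite expRB !lnK ?posrE // mulrCA divff ?mulr1 // gt_eqF. Qed.

Lemma log_tangent_le (x y : R) : 0 < x -> 0 < y -> y * (1 + ln x - ln y) <= x.
Proof.
move=> x0 y0; rewrite [leRHS](log_tangent_expR x0 y0) -addrA ler_pM2l //.
exact: expR_ge1Dx.
Qed.

Lemma log_tangent_eq (x y : R) : 0 < x -> 0 < y -> y * (1 + ln x - ln y) = x -> x = y.
Proof.
move=> x0 y0; rewrite [RHS](log_tangent_expR x0 y0) -addrA => /(mulfI (lt0r_neq0 y0)) tangent.
have [/eqP|/expR_gt1Dx] := eqVneq (ln x - ln y) 0; last by rewrite tangent ltxx.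
by rewrite subr_eq0 => /eqP; apply: ln_inj; rewrite posrE.
Qed.

End LogTangent.

Section GibbsInequality.
Variables (R : realType) (N : nat) (e : 'I_N -> 'I_N -> R) (r : 'I_N -> R) (b : R).
Hypothesis e_ge0 : forall i k, 0 <= e i k.
Hypothesis r_ge0 : forall i, 0 <= r i.
Hypothesis harmonic : forall i, (\sum_j e j i) * r i = \sum_k e i k * r k.
Hypothesis row_sum : forall i, \sum_k e i k = b.

(* Nonnegative by [log_tangent_le]; in the double sum the logarithms cancel by
   [harmonic], leaving [b * \sum_i r i - \sum_i d_i * r i]. *)
Let gibbs_term i k := e i k * r i - e i k * r k * (1 + ln (r i) - ln (r k)).

Lemma harmonic_pos i k : 0 < e i k -> 0 < r k -> 0 < r i.
Proof.
move=> eik rk; rewrite lt0r r_ge0 andbT; apply/eqP => ri0.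
suff : 0 < \sum_j e i j * r j by rewrite -harmonic ri0 mulr0 ltxx.
rewrite (bigD1 k) //= ltr_pwDl ?mulr_gt0 ?sumr_ge0 // => j _.
by rewrite mulr_ge0.
Qed.

Lemma gibbs_term_ge0 i k : 0 <= gibbs_term i k.
Proof.
rewrite /gibbs_term subr_ge0 -mulrA.
have [eik0|eik] := eqVneq (e i k) 0; first by rewrite eik0 !mul0r.
have eik_gt0 : 0 < e i k by rewrite lt0r eik e_ge0.
rewrite ler_wpM2l ?e_ge0 //.
have [->|rk0] := eqVneq (r k) 0; first by rewrite mul0r.
have rk_gt0 : 0 < r k by rewrite lt0r rk0 r_ge0.
exact: log_tangent_le (harmonic_pos eik_gt0 rk_gt0) rk_gt0.
Qed.

Lemma sum_gibbs_term :
  \sum_i \sum_k gibbs_term i k = b * \sum_i r i - \sum_i (\sum_j e j i) * r i.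
Proof.
have expand i k : gibbs_term i k =
    e i k * r i - e i k * r k - (e i k * r k * ln (r i) - e i k * r k * ln (r k)).
  by rewrite /gibbs_term; ring.
have births : \sum_i \sum_k e i k * r i = b * \sum_i r i.
  by rewrite big_distrr; apply: eq_bigr => i _; rewrite -big_distrl row_sum.
have deaths : \sum_i \sum_k e i k * r k = \sum_i (\sum_j e j i) * r i.
  by rewrite exchange_big; apply: eq_bigr => k _; rewrite big_distrl.
have entropy_flux : \sum_i \sum_k e i k * r k * ln (r i) = \sum_i \sum_k e i k * r k * ln (r k).
  transitivity (\sum_i (\sum_j e j i) * r i * ln (r i)).
    by apply: eq_bigr => i _; rewrite -big_distrl /= harmonic.
  by rewrite exchange_big; apply: eq_bigr => k _; rewrite !big_distrl.
under eq_bigr do under eq_bigr do rewrite expand.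
by under eq_bigr do rewrite !sumrB; rewrite !sumrB births deaths entropy_flux subrr subr0.
Qed.

Lemma weighted_col_sum_le : \sum_i (\sum_j e j i) * r i <= b * \sum_i r i.
Proof.
rewrite -subr_ge0 -sum_gibbs_term.
by apply: sumr_ge0 => i _; apply: sumr_ge0 => k _; exact: gibbs_term_ge0.
Qed.

Lemma weighted_col_sum_eq : \sum_i (\sum_j e j i) * r i = b * \sum_i r i ->
  forall i k, 0 < e i k -> r i = r k.
Proof.
move=> eq_sum i k eik.
have term0 : gibbs_term i k = 0.
  move/eqP: (sum_gibbs_term); rewrite eq_sum subrr psumr_eq0 => [|j _]; last first.
    by apply: sumr_ge0 => l _; exact: gibbs_term_ge0.
  move=> /allP/(_ i (mem_index_enum _))/implyP/(_ isT); rewrite psumr_eq0 => [|l _]; last exact: gibbs_term_ge0.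
  by move=> /allP/(_ k (mem_index_enum _))/implyP/(_ isT)/eqP.
move: term0; rewrite /gibbs_term -mulrA -mulrBr => /eqP; rewrite mulf_eq0 gt_eqF //= subr_eq0.
have [->|rk0] := eqVneq (r k) 0; first by rewrite mul0r => /eqP.
have rk_gt0 : 0 < r k by rewrite lt0r rk0 r_ge0.
by move=> /eqP/esym; apply: log_tangent_eq; rewrite ?(harmonic_pos eik rk_gt0).
Qed.

End GibbsInequality.

Lemma mulr_eq_idr (R : idomainType) (x y : R) : x != 0 -> x * y = x <-> y = 1.
Proof.
move=> x0; split=> [|->]; last exact: mulr1.
by move/eqP; rewrite -[X in _ == X]mulr1 (inj_eq (mulfI x0)) => /eqP.
Qed.

Section ConstantBirth.
Variables (R : realType) (N : nat) (p : event N -> R) (b : R).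
Hypothesis p_ge0 : forall e, 0 <= p e.
Hypothesis p_sum1 : \sum_e p e = 1.
Hypothesis fixation : fixation_assumption p.
Hypothesis birthE : forall i, birth p i = b.

Lemma Btot_const_birth : Btot p = N%:R * b.
Proof.
transitivity (\sum_i birth p i) => //.
by under eq_bigr do rewrite birthE; rewrite sumr_const card_ord mulr_natl.
Qed.

Lemma weighted_death_le : \sum_i death p i * rho_site p i <= b.
Proof.
rewrite -[leRHS]mulr1 -(rho_site_sum1 p_ge0 p_sum1 fixation).
exact: weighted_col_sum_le (@e_rate_ge0 _ _ _ p_ge0) (rho_site_ge0 p_ge0 p_sum1)
  (death_rho_site p_ge0 p_sum1 fixation) birthE.
Qed.

Lemma death_const_of_weighted_eq :
  \sum_i death p i * rho_site p i = b -> forall i, death p i = b.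
Proof.
rewrite -{1}[b]mulr1 -(rho_site_sum1 p_ge0 p_sum1 fixation) => weighted_eq.
have edge := weighted_col_sum_eq (@e_rate_ge0 _ _ _ p_ge0) (rho_site_ge0 p_ge0 p_sum1)
  (death_rho_site p_ge0 p_sum1 fixation) birthE weighted_eq.
have rho_const := fixation_const p_ge0 fixation edge.
have rho_neq0 i : rho_site p i != 0.
  apply/eqP => rho0; have := rho_site_sum1 p_ge0 p_sum1 fixation.
  rewrite big1 => [/eqP|j _]; last by rewrite (rho_const j i).
  by rewrite eq_sym oner_eq0.
move=> i; apply: (mulIf (rho_neq0 i)); rewrite death_rho_site //.
by under eq_bigr do rewrite (rho_const _ i); rewrite -big_distrl /= -/(birth p i) birthE.
Qed.

Lemma weighted_death_eq_iff :
  \sum_i death p i * rho_site p i = b <-> forall i j, death p i = death p j.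
Proof.
split=> [/death_const_of_weighted_eq deathE i j | death_const]; first by rewrite !deathE.
have deathE i : death p i = b.
  have N_neq0 : N%:R != 0 :> R by rewrite pnatr_eq0 -lt0n (leq_ltn_trans _ (ltn_ord i)).
  apply: (mulfI N_neq0); rewrite -Btot_const_birth /Btot exchange_big /=.
  transitivity (\sum_(j < N) death p i); first by rewrite sumr_const card_ord mulr_natl.
  by apply: eq_bigr => j _; rewrite (death_const i j).
under eq_bigr do rewrite deathE.
by rewrite -big_distrr /= (rho_site_sum1 p_ge0 p_sum1 fixation) mulr1.
Qed.

End ConstantBirth.

Theorem mainTheorem3 (R : realType) (N : nat) (p : event N -> R) (u : R) :
  is_replacement_rule p ->
  fixation_assumption p ->
  0 < Btot p ->
  0 < u ->
  (forall i j : 'I_N, birth p i = birth p j) ->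
  [/\ rho_overall p <= N%:R^-1,
      Krate p u <= u,
      rho_overall p = N%:R^-1 <-> (forall i j : 'I_N, death p i = death p j)
    & Krate p u = u <-> (forall i j : 'I_N, death p i = death p j)].
Proof.
move=> [p_ge0 p_sum1] fixation Btot_gt0 u_gt0 birth_const.
have [i0 _] := fixation.
have birthE i : birth p i = birth p i0 := birth_const i i0.
set b := birth p i0 in birthE.
have N_gt0 : 0 < N%:R :> R by rewrite ltr0n (leq_ltn_trans _ (ltn_ord i0)).
have BtotE := Btot_const_birth birthE.
have b_gt0 : 0 < b by move: Btot_gt0; rewrite BtotE pmulr_rgt0.
set q := (\sum_i death p i * rho_site p i) / b.
have rhoE : rho_overall p = N%:R^-1 * q by rewrite /rho_overall BtotE invfM -mulrA (mulrC b^-1).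
have KrateE : Krate p u = u * q by rewrite /Krate rhoE mulrA (mulrAC N%:R) mulfV ?gt_eqF // mul1r.
have q_le1 : q <= 1 by rewrite ler_pdivrMr // mul1r weighted_death_le.
have q_eq1 : q = 1 <-> forall i j, death p i = death p j.
  apply: iff_trans (weighted_death_eq_iff p_ge0 p_sum1 fixation birthE).
  split=> [q1|Sb]; last by rewrite /q Sb divff ?gt_eqF.
  by rewrite -(divfK (lt0r_neq0 b_gt0) (\sum_i _)) -/q q1 mul1r.
split.
- by rewrite rhoE ger_pMr ?invr_gt0.
- by rewrite KrateE ger_pMr.
- by rewrite rhoE; apply: iff_trans q_eq1; apply: mulr_eq_idr; rewrite invr_neq0 ?gt_eqF.
- by rewrite KrateE; apply: iff_trans q_eq1; apply: mulr_eq_idr; rewrite gt_eqF.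
Qed.
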